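(* Let $n\le m$ and $0<\rho<n$. Every $(n,k)$ linear code over $\mathrm{GF}(q^m)$ with rank covering radius $\rho$ satisfies $$\left\lfloor n-\rho-\frac{\rho(n-\rho)+\sigma(q)}{m}\right\rfloor+1\le k\le n-\rho.$$
   Context: The rank $\mathrm{rk}(\mathbf x)$ of $\mathbf x\in\mathrm{GF}(q^m)^n$ is the maximum number of its coordinates linearly independent over $\mathrm{GF}(q)$, and $d_{\mathrm R}(\mathbf x,\mathbf y)=\mathrm{rk}(\mathbf x-\mathbf y)$. The rank covering radius of a code $C$ is $\max_{\mathbf x}\min_{\mathbf c\in C}d_{\mathrm R}(\mathbf x,\mathbf c)$. An $(n,k)$ linear code is a $k$-dimensional $\mathrm{GF}(q^m)$-subspace of $\mathrm{GF}(q^m)^n$. $\sigma(q)=\frac{1}{\ln q}\sum_{k=1}^\infty\frac{1}{k(q^k-1)}$. *)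

From HB Require Import structures.
From mathcomp Require Import all_boot all_order all_algebra all_field.
From mathcomp Require Import all_classical all_reals all_analysis.
Set Implicit Arguments. Unset Strict Implicit. Unset Printing Implicit Defensive.
Import Order.TTheory GRing.Theory Num.Theory.
Local Open Scope ring_scope.

(* GF(q) = F (a finite field with q = #|F| elements), GF(q^m) = L a field
   extension of F of dimension m = \dim {:L} over F. *)

Definition rk (F : finFieldType) (L : fieldExtType F) (n : nat)
    (x : 'rV[L]_n) : nat :=
  \max_(S : {set 'I_n} | free [seq x ord0 i | i in S]) #|S|.

Definition rank_dist (F : finFieldType) (L : fieldExtType F) (n : nat)
    (x y : 'rV[L]_n) : nat := rk (x - y).

(* The rank covering radius of C equals rho, i.e.
   max_x min_{c in C} d_R(x, c) = rho, written out. *)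
Definition rank_covering_radius_is (F : finFieldType) (L : fieldExtType F)
    (n : nat) (C : {vspace 'rV[L]_n}) (rho : nat) : Prop :=
  (forall x : 'rV[L]_n, exists2 c, c \in C & (rank_dist x c <= rho)%N) /\
  (exists x : 'rV[L]_n, forall c, c \in C -> (rho <= rank_dist x c)%N).

Definition sigma (R : realType) (q : nat) : R :=
  (ln (q%:R : R))^-1 * limn (fun N : nat => \sum_(1 <= k < N) (k%:R * ((q%:R : R) ^+ k - 1))^-1).

(* The bound k <= n - rho: C has an information set, so every word agrees with a
   codeword outside a set of n - k coordinates and lies at rank distance at most
   n - k from C.
   The lower bound is sphere covering: q^(mn) <= q^(mk) |B|, where the rank ball B
   of radius rho consists of the n-tuples over GF(q^m) whose GF(q)-span has
   dimension at most rho.  Adding one entry at a time gives |B| <= q^(m rho) [n rho]_q,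
   and the q-Pascal rule gives [n r]_q prod_(i <= n-r) (1 - q^-i) <= q^(r(n-r)).
   As the product exceeds 1 - 1/q - 1/q^2, [n rho]_q < q^(rho(n-rho) + 1 + [q = 2]).
   Exponents being integers, m(n - rho - k) <= rho(n - rho) + [q = 2], and
   sigma(q) >= 1/((q-1) ln q) > [q = 2]. *)

From HB Require Import structures.
From mathcomp Require Import all_boot all_order all_algebra all_field.
From mathcomp Require Import all_classical all_reals all_analysis.
From mathcomp Require Import zify ring lra.
Import Order.TTheory GRing.Theory Num.Theory.
Local Open Scope ring_scope.
Set Implicit Arguments. Unset Strict Implicit. Unset Printing Implicit Defensive.

Fixpoint qbinom (q n r : nat) : nat :=
  match n, r with
  | _, 0 => 1
  | 0, _.+1 => 0
  | n'.+1, r'.+1 => q ^ r'.+1 * qbinom q n' r'.+1 + qbinom q n' r'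
  end.

Lemma qbinom0 q n : qbinom q n 0 = 1%N.
Proof. by case: n. Qed.

Lemma qbinomSS q n r :
  qbinom q n.+1 r.+1 = (q ^ r.+1 * qbinom q n r.+1 + qbinom q n r)%N.
Proof. by []. Qed.

Lemma qbinom_small q n r : (n < r)%N -> qbinom q n r = 0%N.
Proof. by elim: n r => [|n IHn] [|r] //= lt_nr; rewrite !IHn ?muln0 // ltnW. Qed.

Lemma qbinomii q n : qbinom q n n = 1%N.
Proof. by elim: n => //= n ->; rewrite qbinom_small ?muln0. Qed.

Lemma qbinom_le1 q n r : (n <= r)%N -> (qbinom q n r <= 1)%N.
Proof. by rewrite leq_eqVlt => /orP[/eqP-> | /qbinom_small->]; rewrite ?qbinomii. Qed.

(* 1 - x - x^2 starts Euler's pentagonal expansion of the infinite product;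
   the extra x^(s+1) is what makes the induction go through. *)
Lemma prod_one_sub_expr_ge (R : realFieldType) (x : R) (s : nat) : 0 <= x <= 1 ->
  1 - x - x ^+ 2 + x ^+ s.+1 <= \prod_(i < s) (1 - x ^+ i.+1).
Proof.
case/andP=> x_ge0 x_le1; case: s => [|s]; first by rewrite big_ord0; nra.
elim: s => [|s IHs]; first by rewrite big_ord1 expr1; lra.
rewrite big_ord_recr /=.
have w_le1 : x ^+ s.+2 <= 1 by rewrite exprn_ile1.
apply: le_trans (ler_wpM2r _ IHs); last by rewrite subr_ge0.
have : 0 <= x ^+ s.+2 * (x ^+ 2 - x ^+ s.+2).
  by rewrite mulr_ge0 ?exprn_ge0 ?subr_ge0 ?ler_wiXn2l.
rewrite [x ^+ s.+3]exprS; move: (x ^+ s.+2) w_le1 => w w_le1; rewrite expr2; nra.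
Qed.

Lemma qbinom_mul_prod_le (R : realFieldType) (q n r : nat) : (0 < q)%N ->
  (qbinom q n r)%:R * \prod_(i < n - r) (1 - (q%:R : R)^-1 ^+ i.+1)
    <= q%:R ^+ (r * (n - r)).
Proof.
move=> q_gt0; set x : R := q%:R^-1.
have q_neq0 : q%:R != 0 :> R by rewrite pnatr_eq0 -lt0n.
have x_ge0 : 0 <= x by rewrite invr_ge0 ler0n.
have x_le1 : x <= 1 by rewrite invf_le1 ?ler1n ?ltr0n.
have prod_le1 s : \prod_(i < s) (1 - x ^+ i.+1) <= 1.
  apply: prodr_ile1 => i _; rewrite subr_ge0 exprn_ile1 //=.
  by rewrite lerBlDr lerDl exprn_ge0.
elim: n r => [|n IHn] [|r]; rewrite ?qbinom0 ?mul1r ?expr0 ?prod_le1 //.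
  by rewrite qbinom_small // mulr0n mul0r exprn_ge0.
have [lt_rn | le_nr] := ltnP r n; last first.
  rewrite subSS (eqP le_nr) muln0 expr0 big_ord0 mulr1 (ler_nat R _ 1).
  exact: qbinom_le1.
rewrite qbinomSS subSS -(subnSK lt_rn) natrD natrM natrX mulrDl.
set s := (n - r.+1)%N in IHn *.
have IH_r := IHn r; rewrite -(subnSK lt_rn) -/s in IH_r.
have IH_rS : q%:R ^+ r.+1 * (qbinom q n r.+1)%:R * \prod_(i < s.+1) (1 - x ^+ i.+1)
    <= q%:R ^+ r.+1 * q%:R ^+ (r.+1 * s) * (1 - x ^+ s.+1).
  rewrite big_ord_recr /= mulrA ler_wpM2r ?subr_ge0 ?exprn_ile1 //.
  by rewrite -mulrA ler_wpM2l ?exprn_ge0 // IHn.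
have pascal_exp : q%:R ^+ r.+1 * q%:R ^+ (r.+1 * s) * (1 - x ^+ s.+1) + q%:R ^+ (r * s.+1)
    = q%:R ^+ (r.+1 * s.+1) :> R.
  rewrite -exprD -mulnS mulSn addnC exprD /x exprVn.
  by rewrite mulrBr mulr1 mulfK ?subrK ?expf_neq0.
by rewrite -pascal_exp lerD.
Qed.

Lemma qbinom_lt_expn (q n r : nat) : (2 <= q)%N ->
  (qbinom q n r < q ^ (r * (n - r) + (q == 2%N).+1))%N.
Proof.
move=> q_ge2; rewrite -(ltr_nat rat) natrX exprD.
have q_ge2R : 2 <= q%:R :> rat by rewrite (ler_nat _ 2).
set x : rat := q%:R^-1; set a := 1 - x - x ^+ 2.
have x_gt0 : 0 < x by rewrite invr_gt0; lra.
have x_le_half : x <= 2^-1 by rewrite lef_pV2 ?posrE //; lra.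
have a_gt0 : 0 < a by rewrite /a expr2; nra.
have a_lt_prod : a < \prod_(i < n - r) (1 - x ^+ i.+1).
  apply: lt_le_trans (prod_one_sub_expr_ge (n - r) _); last by rewrite ltW //=; lra.
  by rewrite ltrDl exprn_gt0.
have aq_ge1 : 1 <= a * q%:R ^+ (q == 2%N).+1.
  have aq : a * q%:R = q%:R - 1 - x by rewrite /a /x; field; rewrite gt_eqF //; lra.
  case: eqP => [q2 | /eqP q_neq2]; first by rewrite expr2 mulrA aq /x q2; lra.
  have q_ge3 : 3 <= q%:R :> rat by rewrite (ler_nat _ 3) ltn_neqAle eq_sym q_neq2.
  by rewrite expr1 aq; lra.
have Ga_lt : (qbinom q n r)%:R * a < q%:R ^+ (r * (n - r)).
  have [->|G_gt0] := posnP (qbinom q n r); first by rewrite mul0r exprn_gt0 //; lra.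
  apply: lt_le_trans (qbinom_mul_prod_le _ n r (ltnW q_ge2)).
  by rewrite ltr_pM2l // ltr0n.
apply: le_lt_trans (_ : _ <= (qbinom q n r)%:R * a * q%:R ^+ (q == 2%N).+1) _.
  by rewrite -mulrA ler_peMr.
by rewrite ltr_pM2r // exprn_gt0 //; lra.
Qed.

Section Sigma.
Variables (R : realType) (q : nat).
Hypothesis q_ge2 : (2 <= q)%N.

Let term k : R := (k%:R * ((q%:R : R) ^+ k - 1))^-1.

Let term_ge0 k : 0 <= term k.
Proof.
by rewrite invr_ge0 mulr_ge0 // subr_ge0 exprn_ege1 // (ler_nat _ 1) ltnW.
Qed.

Let term_le_telescope k : (0 < k)%N -> term k <= 2 / k%:R - 2 / k.+1%:R :> R.
Proof.
move=> k_gt0; have k_ge1 : 1 <= k%:R :> R by rewrite (ler_nat _ 1).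
have qk_ge : k.+1%:R <= (q%:R : R) ^+ k.
  by rewrite -natrX ler_nat (leq_trans (ltn_expl k (isT : (1 < 2)%N))) // leq_exp2r.
have -> : 2 / k%:R - 2 / k.+1%:R = (k%:R * (k.+1%:R / 2))^-1 :> R.
  by rewrite -natr1; field; rewrite !gt_eqF //; lra.
rewrite /term lef_pV2 ?posrE ?mulr_gt0 ?divr_gt0 ?ltr0n //; last first.
  by rewrite subr_gt0 (lt_le_trans _ qk_ge) // ltr1n.
by rewrite ler_pM2l ?ltr0n // -natr1; lra.
Qed.

Let partial_sum_le2 N : \sum_(1 <= k < N) term k <= 2.
Proof.
have telescope M : \sum_(1 <= k < M.+1) term k <= 2 - 2 / M.+1%:R.
  elim: M => [|M IHM]; first by rewrite big_geq // divr1; lra.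
  rewrite big_nat_recr //=; apply: le_trans (lerD IHM (term_le_telescope _)) _ => //.
  by rewrite addrA subrK.
case: N => [|N]; first by rewrite big_geq //; lra.
by apply: le_trans (telescope N) _; rewrite gerBl divr_ge0.
Qed.

Lemma sigma_ge : ((q%:R - 1) * ln (q%:R : R))^-1 <= sigma R q.
Proof.
pose u N := \sum_(1 <= k < N) term k.
have u_nd : nondecreasing_seq u.
  move=> M N le_MN; rewrite /u; have [M_le1 | M_gt1] := leqP M 1.
    by rewrite big_geq // sumr_ge0.
  by rewrite (big_cat_nat (ltnW M_gt1) le_MN) /= lerDl sumr_ge0.
have u_cvg : cvgn u.
  by apply: nondecreasing_is_cvgn => //; exists 2 => _ [N _ <-]; apply: partial_sum_le2.
have := nondecreasing_cvgn_le u_nd u_cvg 2.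
rewrite /u big_nat1 /term mul1r expr1 => u2_le.
have -> : sigma R q = (ln (q%:R : R))^-1 * limn u by [].
by rewrite invfM mulrC ler_wpM2l // invr_ge0 ln_ge0 // (ler_nat _ 1) ltnW.
Qed.

Lemma sigma_gt : (q == 2%N)%:R < sigma R q.
Proof.
apply: lt_le_trans sigma_ge.
have ln_gt0 : 0 < ln (q%:R : R) by rewrite ln_gt0 // (ltr_nat _ 1).
case: eqP ln_gt0 => [-> | _] ln_gt0; last first.
  by rewrite invr_gt0 mulr_gt0 // subr_gt0 (ltr_nat _ 1).
have ln2_lt1 : ln (2 : R) < 1.
  rewrite -[X in _ < X](expRK 1) ltr_ln ?posrE ?expR_gt0 //.
  by have := @expR_gt1Dx R 1 (oner_neq0 _); lra.
by rewrite (_ : 2%:R - 1 = 1 :> R) ?mul1r ?invf_gt1 //; lra.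
Qed.

End Sigma.

Section FreeCompletion.
Variables (K : fieldType) (vT : vectType K).

Lemma dimv_add_line (U : {vspace vT}) v : v \notin U -> \dim (U + <[v]>) = (\dim U).+1.
Proof.
move=> vNU; apply/eqP; rewrite eqn_leq; apply/andP; split.
  by rewrite -addn1 (leq_trans (dimv_add_leqif U <[v]>)) // leq_add2l dim_vline leq_b1.
rewrite (ltn_leqif (dimv_leqif_sup (addvSl U <[v]>))); apply: contra vNU => sU.
exact: subvP sU _ (subvP (addvSr U _) _ (memv_line v)).
Qed.

Lemma exists_free_completion (I : finType) (f : I -> vT) (V : {vspace vT}) :
  exists Z : {set I},
    \dim (V + \sum_(i in Z) <[f i]>) = (\dim V + #|Z|)%N
    /\ forall i, f i \in (V + \sum_(j in Z) <[f j]>)%VS.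
Proof.
pose free_mod (Z : {set I}) := \dim (V + \sum_(i in Z) <[f i]>) == (\dim V + #|Z|)%N.
have free_mod0 : free_mod finset.set0 by rewrite /free_mod big_set0 addv0 cards0 addn0.
have [Z /eqP dimZ maxZ] := arg_maxnP (fun Z : {set I} => #|Z|) free_mod0.
exists Z; split=> // i; apply/negPn/negP => fiNZ.
have iNZ : i \notin Z.
  apply: contra fiNZ => iZ; apply: subvP (addvSr V _) _ _.
  exact: subvP (sumv_sup i iZ (subvv _)) _ (memv_line _).
suff /maxZ : free_mod (i |: Z) by rewrite /= cardsU1 iNZ ltnn.
rewrite /free_mod big_setU1 //= [(<[_]> + _)%VS]addvC addvA.
by rewrite dimv_add_line // dimZ cardsU1 iNZ addnS.
Qed.

End FreeCompletion.

Lemma exists_information_set (K : fieldType) n (V : {vspace 'rV[K]_n}) :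
  exists Z : {set 'I_n}, #|Z| = (n - \dim V)%N /\
    forall x, exists2 c, c \in V & forall j, j \notin Z -> (x - c) ord0 j = 0.
Proof.
have [Z [dimZ spanZ]] := exists_free_completion (fun i : 'I_n => 'e_i : 'rV[K]_n) V.
have fullZ : (V + \sum_(i in Z) <['e_i]>)%VS = fullv.
  apply/vspaceP => x; rewrite memvf (row_sum_delta x).
  by apply: rpred_sum => j _; apply: rpredZ.
exists Z; split.
  by rewrite -(addKn (\dim V) #|Z|) -dimZ fullZ dimvf dim_matrix mul1r.
move=> x; have /memv_addP[c cV [s /memv_sumP[a aZ ->] ->]] :
    x \in (V + \sum_(i in Z) <['e_i]>)%VS by rewrite fullZ memvf.
exists c => // j jNZ; rewrite addrC addKr summxE big1 // => i iZ.
have /vlineP[k ->] := aZ i iZ; rewrite !mxE eqxx /=.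
by case: eqP => [ji | _]; [rewrite ji iZ in jNZ | rewrite mulr0].
Qed.

Section RankBall.
Variables (F : finFieldType) (vT : vectType F).
Local Notation W := (finvect_type vT).

(* Vectors of vT^n are n-tuples over the finType copy W of vT, so that balls
   can be counted; rank is the dimension of the span of the entries. *)
Definition rank_ball n r := [set t : n.-tuple W | \dim <<(t : seq W)>> <= r]%N.

Lemma card_finvect : #|W| = (#|F| ^ dim vT)%N.
Proof. by rewrite -(card_vspacef (Vector.class W)) card_vspace dimvf. Qed.

Lemma card_rank_ball_max n r : (#|rank_ball n r| <= #|F| ^ (dim vT * n))%N.
Proof. by rewrite expnM -card_finvect -card_tuple max_card. Qed.

Lemma card_span_cons_le (t : seq W) r :
  (#|[set w : W | \dim <<w :: t>> <= r]|
     <= (if \dim <<t>> < r then #|W| else 0)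
        + (if \dim <<t>> <= r then #|F| ^ r else 0))%N.
Proof.
have le_t_wt w : (<<t>> <= <<w :: t>>)%VS by rewrite span_cons addvSr.
case: ltngtP => [lt_tr | lt_rt | eq_tr].
- exact: leq_trans (max_card _) (leq_addr _ _).
- rewrite leqn0 cards_eq0; apply/eqP/setP => w; rewrite !inE.
  by apply/negbTE; rewrite -ltnNge (leq_trans lt_rt) ?dimvS.
- rewrite add0n -eq_tr -card_vspace; apply/subset_leq_card/fintype.subsetP => w.
  rewrite inE => le_wt_t.
  have /eqP -> : <<t>>%VS == <<w :: t>>%VS by rewrite eqEdim le_t_wt.
  by rewrite memv_span ?mem_head.
Qed.

Lemma card_rank_ballS n r :
  #|rank_ball n.+1 r|
    = (\sum_(t : n.-tuple W) #|[set w : W | \dim <<w :: (t : seq W)>> <= r]|)%N.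
Proof.
rewrite /rank_ball -sum1dep_card.
pose cons (p : n.-tuple W * W) : n.+1.-tuple W := [tuple of p.2 :: p.1].
rewrite (reindex cons) /=; last first.
  exists (fun t : n.+1.-tuple W => ([tuple of behead t], thead t)) => [[t w] _ | t _].
    by congr pair; apply: val_inj.
  by rewrite [RHS]tuple_eta.
rewrite -(pair_big_dep xpredT
  (fun (t : n.-tuple W) (w : W) => \dim <<w :: (t : seq W)>> <= r)%N (fun _ _ => 1%N)).
by apply: eq_bigr => t _; rewrite sum1dep_card.
Qed.

Lemma card_rank_ballS_le n r :
  (#|rank_ball n.+1 r|
     <= #|[set t : n.-tuple W | \dim <<(t : seq W)>> < r]| * #|W|
        + #|rank_ball n r| * #|F| ^ r)%N.
Proof.
rewrite card_rank_ballS -!sum_nat_cond_const.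
rewrite [X in (_ <= X + _)%N]big_mkcond [X in (_ <= _ + X)%N]big_mkcond -big_split /=.
by apply: leq_sum => t _; apply: card_span_cons_le.
Qed.

Lemma card_rank_ball n r : (r <= n)%N ->
  (#|rank_ball n r| <= #|F| ^ (dim vT * r) * qbinom #|F| n r)%N.
Proof.
elim: n r => [|n IHn] r.
  by rewrite leqn0 => /eqP->; rewrite qbinomii muln1 card_rank_ball_max.
rewrite leq_eqVlt => /orP[/eqP-> | lt_rn].
  by rewrite qbinomii muln1 card_rank_ball_max.
apply: leq_trans (card_rank_ballS_le n r) _.
case: r lt_rn => [|r] lt_rn.
  rewrite (_ : [set t | _] = finset.set0); last by apply/setP => t; rewrite !inE.
  rewrite cards0 add0n muln0 !expn0 !muln1.
  by have := IHn 0 (leq0n n); rewrite muln0 expn0 mul1n qbinom0.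
rewrite (_ : [set t | _] = rank_ball n r); last by apply/setP => t; rewrite !inE.
apply: leq_trans (leq_add (leq_mul (IHn r (ltnW lt_rn)) (leqnn _))
                          (leq_mul (IHn r.+1 lt_rn) (leqnn _))) _.
by rewrite qbinomSS card_finvect mulnSr expnD; apply: eq_leq; ring.
Qed.

End RankBall.

Section RankMetric.
Variables (F : finFieldType) (L : fieldExtType F) (n : nat).

Lemma rk_ge_dim_span (x : 'rV[L]_n) :
  (\dim <<[seq x ord0 i | i <- enum 'I_n]>> <= rk x)%N.
Proof.
have [Z [dimZ spanZ]] := exists_free_completion (fun i => x ord0 i) 0%VS.
rewrite add0v dimv0 add0n in dimZ; rewrite add0v in spanZ.
have spanZE : <<[seq x ord0 i | i in Z]>>%VS = (\sum_(i in Z) <[x ord0 i]>)%VS.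
  by rewrite span_def big_map big_enum.
have freeZ : free [seq x ord0 i | i in Z] by rewrite /free spanZE dimZ size_map -cardE.
apply: leq_trans (leq_bigmax_cond _ freeZ); rewrite -dimZ dimvS //.
by apply/span_subvP => _ /mapP[i _ ->]; apply: spanZ.
Qed.

Lemma rk_le_card_support (x : 'rV[L]_n) (Z : {set 'I_n}) :
  (forall j, j \notin Z -> x ord0 j = 0) -> (rk x <= #|Z|)%N.
Proof.
move=> xZ; apply/bigmax_leqP => S freeS.
apply/subset_leq_card/fintype.subsetP => j jS; apply: contraT => /xZ xj0.
have := free_not0 freeS (map_f _ _ : x ord0 j \in _).
by rewrite xj0 eqxx; apply; rewrite mem_enum.
Qed.

Lemma covering_radius_le_codim (C : {vspace 'rV[L]_n}) rho :
  (exists x : 'rV[L]_n, forall c, c \in C -> (rho <= rank_dist x c)%N) ->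
  (rho <= n - \dim C)%N.
Proof.
move=> [x far]; have [Z [cardZ infoZ]] := exists_information_set C.
have [c cC supp] := infoZ x.
by rewrite -cardZ (leq_trans (far c cC)) // rk_le_card_support.
Qed.

Lemma sphere_covering_card (C : {vspace 'rV[L]_n}) rho :
  (forall x : 'rV[L]_n, exists2 c, c \in C & (rank_dist x c <= rho)%N) ->
  (#|F| ^ (dim L * n) <= #|F| ^ (dim L * \dim C) * #|rank_ball L n rho|)%N.
Proof.
move=> cover; pose W := finvect_type L; pose b := vbasis C.
pose translate (p : (\dim C).-tuple W * n.-tuple W) : n.-tuple W :=
  [tuple ((\sum_i (tnth p.1 i : L) *: tnth b i) + \row_j (tnth p.2 j : L)) ord0 j | j < n].
have onto : [set: n.-tuple W]
    \subset translate @: finset.setX [set: (\dim C).-tuple W] (rank_ball L n rho).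
  apply/fintype.subsetP => y _; pose x : 'rV[L]_n := \row_j (tnth y j : L).
  have [c cC near_c] := cover x.
  apply/imsetP; exists ([tuple coord b i c | i < \dim C], [tuple (x - c) ord0 j | j < n]).
    by rewrite !inE /= (leq_trans (rk_ge_dim_span (x - c))).
  have codeword_c : \sum_i (tnth [tuple coord b i c | i < \dim C] i : L) *: tnth b i = c.
    by rewrite [RHS](coord_vbasis cC); apply: eq_bigr => i _; rewrite tnth_mktuple (tnth_nth 0).
  have error_e : \row_j (tnth [tuple (x - c) ord0 j | j < n] j : L) = x - c.
    by apply/rowP => j; rewrite mxE tnth_mktuple.
  apply: eq_from_tnth => j.
  by rewrite !tnth_mktuple /= codeword_c error_e addrC subrK mxE.
rewrite !expnM -card_finvect -!card_tuple -cardsT.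
apply: leq_trans (subset_leq_card onto) _.
by rewrite (leq_trans (leq_imset_card _ _)) // cardsX cardsT.
Qed.

Lemma sphere_covering_bound (C : {vspace 'rV[L]_n}) rho : (rho <= n)%N ->
  (forall x : 'rV[L]_n, exists2 c, c \in C & (rank_dist x c <= rho)%N) ->
  (\dim {:L} * (n - rho - \dim C) <= rho * (n - rho) + (#|F| == 2%N))%N.
Proof.
move=> le_rho_n cover; have q_gt1 : (1 < #|F|)%N := finNzRing_gt1 F.
have : (#|F| ^ (dim L * n)
        < #|F| ^ (dim L * \dim C + dim L * rho + (rho * (n - rho) + (#|F| == 2%N).+1)))%N.
  apply: leq_ltn_trans (sphere_covering_card cover) _.
  rewrite -addnA expnD ltn_pmul2l ?expn_gt0 ?(ltnW q_gt1) //.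
  apply: leq_ltn_trans (card_rank_ball _ le_rho_n) _.
  by rewrite expnD ltn_pmul2l ?expn_gt0 ?(ltnW q_gt1) ?qbinom_lt_expn.
rewrite ltn_exp2l // dimvf; move: (rho * (n - rho))%N => e; rewrite !mulnBr.
move: (dim L * n)%N (dim L * rho)%N (dim L * \dim C)%N; lia.
Qed.

End RankMetric.

Theorem proposition13 (R : realType) (F : finFieldType) (L : fieldExtType F)
    (n rho : nat) (C : {vspace 'rV[L]_n}) :
  (n <= \dim {: L})%N -> (0 < rho)%N -> (rho < n)%N ->
  rank_covering_radius_is C rho ->
  let q := #|F| in let m := \dim {: L} in let k := \dim C in
  (Num.floor ((n%:R : R) - rho%:R
      - (rho%:R * (n%:R - rho%:R) + sigma R q) / m%:R) + 1 <= k%:Z)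
  /\ (k <= n - rho)%N.
Proof.
move=> le_n_m rho_gt0 lt_rho_n [cover far] q m k.
have le_k : (k <= n - rho)%N by have := covering_radius_le_codim far; rewrite -/k; lia.
split=> //; rewrite lezD1 floor_lt_int.
have m_gt0 : (0 < m%:R :> R) by rewrite ltr0n; lia.
have := sphere_covering_bound (ltnW lt_rho_n) cover; rewrite -/q -/m -/k -(ler_nat R).
rewrite natrD !natrM !natrB ?(ltnW lt_rho_n) // => bound.
have := sigma_gt R (finNzRing_gt1 F); rewrite -/q => sigma_gt.
have : n%:R - rho%:R - k%:R < (rho%:R * (n%:R - rho%:R) + sigma R q) / m%:R.
  by rewrite ltr_pdivlMr //; lra.
rewrite -[k%:~R]/(k%:R : R); lra.
Qed.
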